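(* Let $(V,e)$ be a unital $\ast$-normed space which is a function system, i.e. $\operatorname{ball}V=S^\circ$ where $S=V_{he}^\ast\cap\operatorname{ball}V^\ast$. Let $\mathfrak{c}=\{v\in V_h:\langle v,\varphi\rangle\ge0\ \forall\varphi\in S\}$ and $\|v\|_e=\sup\{|\langle v,\varphi\rangle|:\varphi\in S\}$. Then $\mathfrak{c}$ is a separated, closed, unital cone in $V$ with $S(\mathfrak{c})=S$, and $\|\cdot\|=\|\cdot\|_e$. In particular $\|e\|=1$.
   Context: A $\ast$-normed space is a complex vector space with involution and norm satisfying $\|v^\ast\|=\|v\|$; $V_h$ are the hermitian elements; $V^\ast$ has involution $\langle v,\varphi^\ast\rangle=\overline{\langle v^\ast,\varphi\rangle}$, $V_h^\ast$ its hermitian bounded functionals, and for nonzero $e\in V_h$, $V_{he}^\ast=\{y\in V_h^\ast:\langle e,y\rangle=1\}$. $(V,e)$ is unital if $V_{he}^\ast\cap\operatorname{ball}V^\ast\neq\varnothing$. $S^\circ=\{v\in V:|\langle v,\varphi\rangle|\le1\ \forall\varphi\in S\}$. A cone $\mathfrak{c}\subseteq V_h$ is separated if $\mathfrak{c}\cap-\mathfrak{c}=\{0\}$, unital if for every $v\in V_h$ some $v+re$ ($r\ge0$) lies in $\mathfrak{c}$; $S(\mathfrak{c})$ is the set of linear functionals $\varphi$ on $V$ with $\varphi(\mathfrak{c})\ge0$, $\varphi(e)=1$. *)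

From mathcomp Require Import all_boot all_order all_algebra.
From mathcomp Require Import all_classical all_reals all_analysis.
From mathcomp Require Export complex.
Set Implicit Arguments. Unset Strict Implicit. Unset Printing Implicit Defensive.
Import Order.TTheory GRing.Theory Num.Theory.
Local Open Scope ring_scope.
Local Open Scope classical_set_scope.

Section StarNormed.
Variables (R : realType) (V : normedModType R[i]).

Definition star_normed (star : V -> V) : Prop :=
  [/\ forall u v, star (u + v) = star u + star v,
      forall (a : R[i]) v, star (a *: v) = (a^*)%C *: star v,
      forall v, star (star v) = v &
      forall v, `|star v| = `|v| ].

Definition hermitian_elts (star : V -> V) : set V := [set v | star v = v].

Definition lin_functional (phi : V -> R[i]) : Prop :=
  forall (a : R[i]) u v, phi (a *: u + v) = a * phi u + phi v.

Definition bounded_functional (phi : V -> R[i]) : Prop :=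
  lin_functional phi /\ exists M : R[i], forall v, `|phi v| <= M * `|v|.

Definition dual_ball : set (V -> R[i]) :=
  [set phi | bounded_functional phi /\ forall v, `|phi v| <= `|v|].

(* hermitian functionals: phi^* = phi, where <v, phi^*> = conj <v^*, phi> *)
Definition hermitian_functional (star : V -> V) (phi : V -> R[i]) : Prop :=
  forall v, phi v = ((phi (star v))^*)%C.

Definition Vhe_dual (star : V -> V) (e : V) : set (V -> R[i]) :=
  [set phi | bounded_functional phi /\ hermitian_functional star phi /\ phi e = 1].

Definition state_set (star : V -> V) (e : V) : set (V -> R[i]) :=
  Vhe_dual star e `&` dual_ball.

Definition unital_space (star : V -> V) (e : V) : Prop :=
  state_set star e !=set0.

Definition polar (S : set (V -> R[i])) : set V :=
  [set v | forall phi, S phi -> `|phi v| <= 1].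

Definition unit_ball : set V := [set v | `|v| <= 1].

Definition is_cone (star : V -> V) (c : set V) : Prop :=
  [/\ c `<=` hermitian_elts star, c 0,
      forall u v, c u -> c v -> c (u + v) &
      forall (r : R[i]) v, 0 <= r -> c v -> c (r *: v)].

Definition separated_cone (c : set V) : Prop := c `&` [set - v | v in c] = [set 0].

Definition unital_cone (star : V -> V) (e : V) (c : set V) : Prop :=
  forall v, hermitian_elts star v -> exists r : R[i], 0 <= r /\ c (v + r *: e).

Definition states_of_cone (e : V) (c : set V) : set (V -> R[i]) :=
  [set phi | lin_functional phi /\ (forall v, c v -> 0 <= phi v) /\ phi e = 1].

Definition e_norm (S : set (V -> R[i])) (v : V) : R :=
  sup [set ComplexField.Normc.normc (phi v) | phi in S].

End StarNormed.

From mathcomp Require Import all_boot all_order all_algebra.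
From mathcomp Require Import all_classical all_reals all_analysis.
From mathcomp Require Import complex.
From mathcomp Require Import ring.
Set Implicit Arguments. Unset Strict Implicit. Unset Printing Implicit Defensive.
Import Order.TTheory GRing.Theory Num.Theory.
Local Open Scope ring_scope.
Local Open Scope classical_set_scope.

(** States are real on hermitian elements and contractive, so for hermitian [h]
    both [|h| e + h] and [|h| e - h] lie in the cone.  Consequently a positive
    functional [phi] with [phi e = 1] satisfies [phi h <= |h|] on hermitian [h],
    is itself hermitian, and is contractive: rotate [v] so that [phi v >= 0]
    and pass to its real part [(v + star v) / 2], which is no longer than [v].
    Hence [S(c) = S].  The function system hypothesis [ball V = S°] says that
    [|v| <= r] as soon as every state is bounded by [r] at [v]; this yields
    [|.| = |.|_e], [|e| = 1], and that the states separate points, which makes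
    the cone separated. *)

Section LinFunctional.
Variables (R : realType) (V : normedModType R[i]) (phi : V -> R[i]).
Hypothesis phi_lin : lin_functional phi.

Lemma lin_functionalD u v : phi (u + v) = phi u + phi v.
Proof. by have := phi_lin 1 u v; rewrite scale1r mul1r. Qed.

Lemma lin_functional0 : phi 0 = 0.
Proof. by apply: (addrI (phi 0)); rewrite -lin_functionalD !addr0. Qed.

Lemma lin_functionalZ a u : phi (a *: u) = a * phi u.
Proof. by have := phi_lin a u 0; rewrite !addr0 lin_functional0 addr0. Qed.

Lemma lin_functionalN u : phi (- u) = - phi u.
Proof. by rewrite -scaleN1r lin_functionalZ mulN1r. Qed.

Lemma lin_functionalB u v : phi (u - v) = phi u - phi v.
Proof. by rewrite lin_functionalD lin_functionalN. Qed.

End LinFunctional.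

Lemma closure_norm_approx (K : numFieldType) (W : normedModType K) (A : set W)
    v (eps : K) :
  closure A v -> 0 < eps -> exists2 w, A w & `|v - w| < eps.
Proof.
move=> clAv eps_gt0; have [w [Aw vw]] := clAv _ (nbhsx_ballx v eps eps_gt0).
by exists w => //; move: vw; rewrite -ball_normE.
Qed.

Lemma normC_Re (R : realType) (V : normedModType R[i]) (v : V) :
  `|v| = (complex.Re `|v|)%:C%C.
Proof. by rewrite RRe_real // normr_real. Qed.

Section FunctionSystem.
Variables (R : realType) (V : normedModType R[i]) (star : V -> V) (e : V).
Hypothesis hstar : star_normed star.
Hypothesis e_herm : hermitian_elts star e.

Local Notation S := (state_set star e).

Lemma starD u v : star (u + v) = star u + star v. Proof. by case: hstar. Qed.
Lemma starZ a v : star (a *: v) = a^* *: star v. Proof. by case: hstar. Qed.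
Lemma starK v : star (star v) = v. Proof. by case: hstar. Qed.
Lemma norm_star v : `|star v| = `|v|. Proof. by case: hstar. Qed.

Lemma star0 : star 0 = 0.
Proof. by apply: (addrI (star 0)); rewrite -starD !addr0. Qed.

Lemma starN v : star (- v) = - star v.
Proof. by apply: (addrI (star v)); rewrite -starD !subrr star0. Qed.

Lemma starB u v : star (u - v) = star u - star v.
Proof. by rewrite starD starN. Qed.

Lemma star_scale_real (a : R[i]) v : a \is Num.real -> star (a *: v) = a *: star v.
Proof. by move=> a_real; rewrite starZ conj_Creal. Qed.

Definition state_cone : set V :=
  [set v | hermitian_elts star v /\ forall phi, S phi -> 0 <= phi v].

Definition re_part (v : V) : V := 2^-1 *: (v + star v).

Lemma re_part_herm v : star (re_part v) = re_part v.
Proof. by rewrite star_scale_real ?rpredV ?realn // starD starK addrC. Qed.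

Lemma norm_re_part_le v : `|re_part v| <= `|v|.
Proof.
rewrite normrZ ger0_norm ?invr_ge0 ?ler0n //.
rewrite ler_pdivrMl ?ltr0n // mulr2n mulrDl !mul1r -{2}(norm_star v).
exact: ler_normD.
Qed.

Section State.
Variable phi : V -> R[i].
Hypothesis Sphi : S phi.

Lemma state_lin : lin_functional phi. Proof. by case: Sphi => [[[]]]. Qed.
Lemma state_e : phi e = 1. Proof. by case: Sphi => [[_ []]]. Qed.
Lemma state_norm_le v : `|phi v| <= `|v|. Proof. by case: Sphi => _ []. Qed.

Lemma state_real v : star v = v -> phi v \is Num.real.
Proof.
case: Sphi => [[_ [phi_herm _]] _] v_herm.
by apply/CrealP; have := phi_herm v; rewrite v_herm => /esym.
Qed.

End State.

Lemma state_cone_addr_norm h : star h = h -> state_cone (h + `|h| *: e).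
Proof.
move=> h_herm; split.
  by rewrite /hermitian_elts /= starD star_scale_real ?normr_real // h_herm e_herm.
move=> phi Sphi; have phi_lin := state_lin Sphi.
rewrite lin_functionalD // lin_functionalZ // state_e // mulr1 -[`|h|]opprK subr_ge0.
by have := state_norm_le Sphi h; rewrite real_ler_norml ?state_real // => /andP[].
Qed.

Lemma state_cone_norm_subr h : star h = h -> state_cone (`|h| *: e - h).
Proof.
move=> h_herm; split.
  by rewrite /hermitian_elts /= starB star_scale_real ?normr_real // h_herm e_herm.
move=> phi Sphi; have phi_lin := state_lin Sphi.
rewrite lin_functionalB // lin_functionalZ // state_e // mulr1 subr_ge0.
rewrite (le_trans _ (state_norm_le Sphi h)) //.
exact/real_ler_norm/state_real.
Qed.

Lemma state_cone_is_cone : is_cone star state_cone.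
Proof.
split.
- by move=> v [].
- by split=> [|phi Sphi]; [exact: star0 | rewrite (lin_functional0 (state_lin Sphi))].
- move=> u v [u_herm u_ge0] [v_herm v_ge0]; split.
    by rewrite /hermitian_elts /= starD u_herm v_herm.
  move=> phi Sphi; rewrite (lin_functionalD (state_lin Sphi)).
  exact: addr_ge0 (u_ge0 _ Sphi) (v_ge0 _ Sphi).
- move=> r v r_ge0 [v_herm v_ge0]; split.
    by rewrite /hermitian_elts /= star_scale_real ?ger0_real // v_herm.
  move=> phi Sphi; rewrite (lin_functionalZ (state_lin Sphi)).
  exact: mulr_ge0 r_ge0 (v_ge0 _ Sphi).
Qed.

Lemma state_cone_unital : unital_cone star e state_cone.
Proof.
by move=> v v_herm; exists `|v|; split; [exact: normr_ge0 | exact: state_cone_addr_norm].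
Qed.

Lemma state_cone_closed : closed state_cone.
Proof.
move=> v clv.
have v_herm : star v = v.
  apply/eqP; rewrite -subr_eq0 -normr_eq0; apply/negP => /negP d_neq0.
  have d_gt0 : 0 < `|star v - v| by rewrite lt_def d_neq0 normr_ge0.
  have [w [w_herm _] vw] := closure_norm_approx clv (divr_gt0 d_gt0 (ltr0n _ 2)).
  have d_le : `|star v - v| <= `|v - w| + `|v - w|.
    have := ler_distD (star w) (star v) v.
    by rewrite -starB norm_star w_herm (distrC w v).
  by have := le_lt_trans d_le (ltrD vw vw); rewrite -splitr ltxx.
split=> // phi Sphi; rewrite real_leNgt ?real0 ?state_real //; apply/negP => phiv_lt0.
have [w [_ w_ge0] vw] : exists2 w, state_cone w & `|v - w| < - phi v.
  by apply: closure_norm_approx; rewrite ?oppr_gt0.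
have phiv_le : - phi v <= phi w - phi v by rewrite lerDr w_ge0.
have phiw_le : phi w - phi v <= `|v - w|.
  rewrite distrC (le_trans _ (state_norm_le Sphi _)) //.
  rewrite (lin_functionalB (state_lin Sphi)).
  by apply/real_ler_norm/rpredB; [exact/ger0_real/w_ge0 | exact: state_real].
by have := le_lt_trans (le_trans phiv_le phiw_le) vw; rewrite ltxx.
Qed.

Section PositiveFunctional.
Variable phi : V -> R[i].
Hypotheses (phi_lin : lin_functional phi)
  (phi_ge0 : forall v, state_cone v -> 0 <= phi v) (phi_e : phi e = 1).

Lemma positive_real h : star h = h -> phi h \is Num.real.
Proof.
move=> h_herm; have := phi_ge0 (state_cone_addr_norm h_herm).
rewrite lin_functionalD // lin_functionalZ // phi_e mulr1 => /ger0_real.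
by rewrite rpredDr // normr_real.
Qed.

Lemma positive_le_norm h : star h = h -> phi h <= `|h|.
Proof.
move=> h_herm; have := phi_ge0 (state_cone_norm_subr h_herm).
by rewrite lin_functionalB // lin_functionalZ // phi_e mulr1 subr_ge0.
Qed.

Lemma positive_star v : phi (star v) = (phi v)^*.
Proof.
set x := phi v; set y := phi (star v).
have real_conj h : star h = h -> (phi h)^* = phi h.
  by move=> /positive_real; rewrite CrealE => /eqP.
have sum_conj : x^* + y^* = x + y.
  rewrite -rmorphD -!lin_functionalD //; apply: real_conj.
  by rewrite starD starK addrC.
have diff_conj : x^* - y^* = y - x.
  have := real_conj ('i *: (v - star v)).
  rewrite starZ starB starK conjCi scaleNr -scalerN opprB => /(_ erefl).
  rewrite lin_functionalZ // lin_functionalB // rmorphM rmorphB /= conjCi.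
  by rewrite mulNr -mulrN => /(mulfI (neq0Ci _)) /(congr1 -%R); rewrite opprK opprB.
have -> : x^* = ((x^* + y^*) + (x^* - y^*)) / 2 by field.
by rewrite sum_conj diff_conj; field.
Qed.

Lemma positive_norm_le v : `|phi v| <= `|v|.
Proof.
have [->|phiv_neq0] := eqVneq (phi v) 0; first by rewrite normr0 normr_ge0.
pose w := (`|phi v| / phi v) *: v.
have phiw : phi w = `|phi v| by rewrite lin_functionalZ // divfK.
have normw : `|w| = `|v|.
  by rewrite normrZ normf_div normr_id divff ?mul1r // normr_eq0.
have : phi (re_part w) = `|phi v|.
  rewrite lin_functionalZ // lin_functionalD // positive_star phiw.
  by rewrite conj_Creal ?normr_real //; field.
move=> <-; rewrite -normw (le_trans (positive_le_norm (re_part_herm w))) //.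
exact: norm_re_part_le.
Qed.

Lemma positive_state : S phi.
Proof.
have phi_bounded : bounded_functional phi.
  by split=> //; exists 1 => v; rewrite mul1r positive_norm_le.
split; split=> //; last exact: positive_norm_le.
by split=> // v; rewrite positive_star; exact/esym/conjCK.
Qed.

End PositiveFunctional.

Lemma states_of_state_cone : states_of_cone e state_cone = S.
Proof.
apply/seteqP; split=> [phi [phi_lin [phi_ge0 phi_e]] | phi Sphi].
  exact: positive_state.
split; first exact: state_lin.
by split=> [v [_ v_ge0] |]; [exact: v_ge0 | exact: state_e].
Qed.

Hypothesis ball_polar : @unit_ball R V = polar S.

Lemma norm_le_of_states v (r : R[i]) :
  0 < r -> (forall phi, S phi -> `|phi v| <= r) -> `|v| <= r.
Proof.
move=> r_gt0 phiv_le; have : unit_ball (r^-1 *: v).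
  rewrite ball_polar => phi Sphi; rewrite (lin_functionalZ (state_lin Sphi)).
  by rewrite normrM ger0_norm ?invr_ge0 ?(ltW r_gt0) // ler_pdivrMl // mulr1 phiv_le.
by rewrite /unit_ball /= normrZ ger0_norm ?invr_ge0 ?(ltW r_gt0) // ler_pdivrMl // mulr1.
Qed.

Lemma states_separate y : (forall phi, S phi -> phi y = 0) -> y = 0.
Proof.
move=> phiy0; apply/normr0_eq0/eqP; rewrite eq_le normr_ge0 andbT.
apply/ler_addgt0Pr => r r_gt0; rewrite add0r; apply: norm_le_of_states => // phi Sphi.
by rewrite phiy0 // normr0 ltW.
Qed.

Lemma state_cone_separated : separated_cone state_cone.
Proof.
apply/seteqP; split=> [x [[_ x_ge0] [y [_ y_ge0] yx]]|x ->].
  suff y0 : y = 0 by rewrite /set1 /= -yx y0 oppr0.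
  apply: states_separate => phi Sphi; apply/eqP; rewrite eq_le y_ge0 // andbT.
  by rewrite -oppr_ge0 -(lin_functionalN (state_lin Sphi)) yx; exact: x_ge0.
have cone0 : state_cone 0 by case: state_cone_is_cone.
by split=> //; exists 0; rewrite ?oppr0.
Qed.

Hypothesis hunital : unital_space star e.

Lemma norm_e_norm v : `|v| = (e_norm S v)%:C%C.
Proof.
rewrite /e_norm; set A := [set _ | _ in _].
have [phi0 Sphi0] := hunital.
have A_ub : ubound A (complex.Re `|v|).
  by move=> _ [phi Sphi <-]; rewrite -lecR -normC_Re; exact: state_norm_le.
have A_sup : has_sup A.
  by split; [exists (ComplexField.Normc.normc (phi0 v)), phi0 | exists (complex.Re `|v|)].
have le_sup phi : S phi -> `|phi v| <= (sup A)%:C%C.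
  move=> Sphi; rewrite -[`|phi v|]/((ComplexField.Normc.normc (phi v))%:C%C) lecR.
  by apply: sup_upper_bound => //; exists phi.
apply/eqP; rewrite eq_le; apply/andP; split.
  apply/ler_addgt0Pr => eps eps_gt0; apply: norm_le_of_states => [|phi Sphi].
    exact: ltr_wpDl (le_trans (normr_ge0 _) (le_sup _ Sphi0)) eps_gt0.
  exact: ler_wpDr (ltW eps_gt0) (le_sup _ Sphi).
by rewrite normC_Re lecR ge_sup //; case: A_sup.
Qed.

Lemma norm_e : `|e| = 1.
Proof.
have [phi0 Sphi0] := hunital.
have e_ball : unit_ball e by rewrite ball_polar => phi Sphi; rewrite state_e // normr1.
apply/eqP; rewrite eq_le; apply/andP; split; first exact: e_ball.
by rewrite -{1}(normr1 R[i]) -(state_e Sphi0) state_norm_le.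
Qed.

End FunctionSystem.

Theorem lemma4p1 (R : realType) (V : normedModType R[i]) (star : V -> V) (e : V)
  (hstar : star_normed star)
  (he_herm : hermitian_elts star e) (he0 : e != 0)
  (hunital : unital_space star e)
  (hfs : @unit_ball R V = polar (state_set star e)) :
  let S := state_set star e in
  let c := [set v | hermitian_elts star v /\ forall phi, S phi -> 0 <= phi v] in
  [/\ is_cone star c, separated_cone c, closed c, unital_cone star e c &
      states_of_cone e c = S] /\
  ((forall v : V, `|v| = (e_norm S v)%:C%C) /\ `|e| = 1).
Proof.
move=> S c; split; first split.
- exact: state_cone_is_cone.
- exact: state_cone_separated hfs.
- exact: state_cone_closed.
- exact: state_cone_unital.
- exact: states_of_state_cone.
split; [exact: norm_e_norm hfs hunital | exact: norm_e hfs hunital].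
Qed.
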